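(* Let $p$ be a prime with $p \equiv \pm 3 \pmod{10}$, and let $G = \mathrm{PSL}(2,p^2)$. If $m(G) = 3$, then $G$ fails the replacement property.
   Context: For a finite group $G$, a finite sequence $s=(g_1,\dots,g_k)$ of elements of $G$ is an irredundant generating sequence if $\langle g_1,\dots,g_k\rangle = G$ and $g_i \notin \langle g_j : j \neq i\rangle$ for every $i$. $m(G)$ denotes the maximal length of an irredundant generating sequence of $G$. An irredundant generating sequence $s=(g_1,\dots,g_k)$ satisfies the replacement property if for every nontrivial $g \in G$ there is an index $i$ such that $(g_1,\dots,g_{i-1},g,g_{i+1},\dots,g_k)$ generates $G$ (not necessarily irredundantly). $G$ satisfies the replacement property if every irredundant generating sequence of length $m(G)$ satisfies it; $G$ fails the replacement property otherwise. *)

From mathcomp Require Import all_boot all_order all_algebra all_fingroup all_solvable all_field.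
Set Implicit Arguments. Unset Strict Implicit. Unset Printing Implicit Defensive.
Import GRing.Theory.
Local Open Scope group_scope.

Section SL2.
Variable F : finFieldType.

Definition SL2_set : {set {'GL_2[F]}} := [set g | (\det (GLval g) == 1)%R].

Lemma SL2_group_set : group_set SL2_set.
Proof.
apply/group_setP; split; first by rewrite inE GL_1E det1.
move=> x y; rewrite !inE GL_MxE det_mulmx => /eqP -> /eqP ->.
by rewrite mulr1.
Qed.

Canonical SL2 : {group {'GL_2[F]}} := Group SL2_group_set.

Definition PSL2 := (SL2 / 'Z(SL2))%G.
End SL2.

Section Gen.
Variable gT : finGroupType.

Definition irredundant_gen_seq (G : {set gT}) (s : seq gT) : Prop :=
  <<[set x in s]>> = G /\
  forall i : 'I_(size s),
    nth 1 s i \notin <<[set nth 1 s j | j : 'I_(size s) & j != i]>>.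

Definition m_equals (G : {set gT}) (k : nat) : Prop :=
  (exists s, irredundant_gen_seq G s /\ size s = k) /\
  (forall s, irredundant_gen_seq G s -> size s <= k)%N.

Definition seq_replacement (G : {set gT}) (s : seq gT) : Prop :=
  forall g, g \in G -> g != 1 ->
    exists i : 'I_(size s), <<[set x in set_nth 1 s i g]>> = G.

Definition group_replacement (G : {set gT}) : Prop :=
  forall s k, m_equals G k -> irredundant_gen_seq G s -> size s = k ->
    seq_replacement G s.
End Gen.

From mathcomp Require Import all_boot all_order all_algebra all_fingroup all_solvable all_field.
From mathcomp Require Import ring zify.

(* Let b^2 lie outside the prime field F_p, so that F = F_p + F_p b^2, and let
   x = [[1,0],[1,1]], y = [[1,1],[0,1]] and h = diag(b, 1/b).  Conjugation by h
   multiplies the off-diagonal entry of x and y by b^(+-2), so <x, y, h> contains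
   all unitriangular matrices, which generate SL(2,F); hence the images of x, y, h
   generate PSL(2,F).  Each pair of them lies in a proper subgroup missing the
   third: the upper triangular matrices contain y and h, the lower triangular ones
   x and h, and the matrices fixed up to sign by the Frobenius map contain x and y.
   So (x, y, h) is irredundant of length 3 = m(G).  The non-central element
   diag(a, 1/a) with a^p = -a lies in all three subgroups, so replacing any of the
   generators by it generates a proper subgroup. *)

Set Implicit Arguments.
Unset Strict Implicit.
Unset Printing Implicit Defensive.
Import GRing.Theory.

Section Covers.
Local Open Scope group_scope.
Variable gT : finGroupType.

Lemma gen_seq_subG (s : seq gT) (H : {group gT}) :
  {subset s <= H} -> <<[set x in s]>> \subset H.
Proof. by move=> sH; rewrite gen_subG; apply/subsetP => x; rewrite inE => /sH. Qed.

Variables (G : {group gT}) (s : seq gT) (K : nat -> {group gT}).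
Hypothesis gen_s : <<[set x in s]>> = G.
Hypothesis G_notsubK : forall i, i < size s -> ~~ (G \subset K i).
Hypothesis s_memK : forall i j, i < size s -> j < size s -> j != i -> nth 1 s j \in K i.

Lemma set_nth_subK i g : i < size s -> g \in K i -> {subset set_nth 1 s i g <= K i}.
Proof.
move=> lti gK x /(nthP 1)[j]; rewrite size_set_nth (maxn_idPr lti) => ltj <-.
rewrite nth_set_nth /=; case: eqVneq => [// | ji].
exact: s_memK.
Qed.

Lemma covers_irredundant : irredundant_gen_seq G s.
Proof.
split=> // i; apply: contra (G_notsubK (ltn_ord i)) => s_i_gen.
have others_sub : <<[set nth 1 s j | j : 'I_(size s) & j != i]>> \subset K i.
  rewrite gen_subG; apply/subsetP => x /imsetP[j]; rewrite inE => ji ->.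
  exact: s_memK.
have s_iK : nth 1 s i \in K i := subsetP others_sub _ s_i_gen.
rewrite -gen_s; apply: gen_seq_subG => x /(nthP 1)[j ltj <-].
have [-> // | ji] := eqVneq j i.
exact: s_memK.
Qed.

Lemma covers_not_seq_replacement g :
  g \in G -> g != 1 -> (forall i, i < size s -> g \in K i) -> ~ seq_replacement G s.
Proof.
move=> gG g1 gK /(_ g gG g1)[i gen_i].
case/negP: (G_notsubK (ltn_ord i)); rewrite -gen_i.
exact/gen_seq_subG/set_nth_subK/gK.
Qed.

Lemma covers_not_group_replacement g :
  m_equals G (size s) -> g \in G -> g != 1 -> (forall i, i < size s -> g \in K i) ->
  ~ group_replacement G.
Proof.
move=> mG gG g1 gK /(_ s _ mG covers_irredundant erefl).
exact: covers_not_seq_replacement gG g1 gK.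
Qed.
End Covers.

Section QuotientCovers.
Local Open Scope group_scope.
Variables (gT : finGroupType) (G N : {group gT}) (s : seq gT) (K : nat -> {group gT}).
Hypothesis gen_s : <<[set x in s]>> = G.
Hypothesis nNG : G \subset 'N(N).
Hypothesis N_subK : forall i, i < size s -> N \subset K i.
Hypothesis G_notsubK : forall i, i < size s -> ~~ (G \subset K i).
Hypothesis s_memK : forall i j, i < size s -> j < size s -> j != i -> nth 1 s j \in K i.

Lemma quotient_covers_not_group_replacement g :
  m_equals (G / N) (size s) -> g \in G -> g \notin N ->
  (forall i, i < size s -> g \in K i) -> ~ group_replacement (G / N).
Proof.
move=> mGN gG gN gK.
have sN : [set x in s] \subset 'N(N).
  by apply: subset_trans nNG; rewrite -gen_s subset_gen.
have gNN : g \in 'N(N) := subsetP nNG g gG.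
apply: (@covers_not_group_replacement _ _ (map (coset N) s) (fun i => K i / N)%G _ _ _ (coset N g));
  rewrite ?size_map //.
- rewrite /= -gen_s quotient_gen // quotientE morphimEsub //; congr <<_>>.
  by apply/setP => y; rewrite inE; apply/mapP/imsetP => -[x xs ->]; exists x; rewrite ?inE in xs *.
- by move=> i lti; rewrite quotientSGK ?G_notsubK ?N_subK.
- move=> i j lti ltj ji; rewrite (nth_map 1) //.
  exact/mem_quotient/s_memK.
- exact: mem_quotient.
- by apply: contra gN => /eqP; apply: coset_idr.
- by move=> i lti; apply/mem_quotient/gK.
Qed.
End QuotientCovers.

Local Open Scope ring_scope.

Section Matrix2.
Variable R : pzRingType.

Definition M2 (a b c d : R) : 'M[R]_2 :=
  \matrix_(i, j) if i == 0 then if j == 0 then a else b else if j == 0 then c else d.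

Lemma M2E (A : 'M[R]_2) : A = M2 (A 0 0) (A 0 1) (A 1 0) (A 1 1).
Proof.
by apply/matrixP => i j; rewrite mxE; case: i => [[|[|//]] ?]; case: j => [[|[|//]] ?];
  congr (A _ _); apply: val_inj.
Qed.

Lemma M2_mul a b c d a' b' c' d' :
  M2 a b c d *m M2 a' b' c' d' =
  M2 (a * a' + b * c') (a * b' + b * d') (c * a' + d * c') (c * b' + d * d').
Proof.
apply/matrixP => i j; rewrite !mxE !big_ord_recl big_ord0 !mxE.
by case: i => [[|[|//]] ?]; case: j => [[|[|//]] ?]; rewrite /= addr0.
Qed.

Lemma mulmx2E (A B : 'M[R]_2) :
  A *m B = M2 (A 0 0 * B 0 0 + A 0 1 * B 1 0) (A 0 0 * B 0 1 + A 0 1 * B 1 1)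
              (A 1 0 * B 0 0 + A 1 1 * B 1 0) (A 1 0 * B 0 1 + A 1 1 * B 1 1).
Proof. by rewrite {1}[A]M2E {1}[B]M2E M2_mul. Qed.

Lemma M2_scalar a : M2 a 0 0 a = a%:M.
Proof. by apply/matrixP => i j; rewrite !mxE; case: i => [[|[|//]] ?]; case: j => [[|[|//]] ?]. Qed.

Lemma M2_1 : M2 1 0 0 1 = 1.
Proof. exact: M2_scalar. Qed.

Lemma M2_opp a b c d : - M2 a b c d = M2 (- a) (- b) (- c) (- d).
Proof. by apply/matrixP => i j; rewrite !mxE; case: (i == 0); case: (j == 0). Qed.

Lemma M2_inj a b c d a' b' c' d' :
  M2 a b c d = M2 a' b' c' d' -> [/\ a = a', b = b', c = c' & d = d'].
Proof.
move=> eqM; have entry i j : M2 a b c d i j = M2 a' b' c' d' i j by rewrite eqM.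
by move: (entry 0 0) (entry 0 1) (entry 1 0) (entry 1 1); rewrite !mxE.
Qed.
End Matrix2.

Lemma M2_map (R S : pzRingType) (f : R -> S) a b c d :
  map_mx f (M2 a b c d) = M2 (f a) (f b) (f c) (f d).
Proof. by apply/matrixP => i j; rewrite !mxE; case: (i == 0); case: (j == 0). Qed.

Lemma M2_det (R : comPzRingType) (a b c d : R) : \det (M2 a b c d) = a * d - b * c.
Proof.
rewrite (expand_det_row _ 0) !big_ord_recl big_ord0 /cofactor !det_mx11 !mxE /=.
by rewrite expr0 expr1 mul1r addr0 mulN1r mulrN.
Qed.

(* Typing group elements as [GL2 F] rather than {'GL_2[F]} makes their group
   operations the ones of the finGroupType instance, so that group lemmas unify
   at once instead of unfolding the whole structure hierarchy. *)
Local Notation GL2 F := (FinGroup.clone {'GL_2[F]} _).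

Lemma GLval_inj n (R : finComUnitRingType) : injective (@GLval n R).
Proof. exact: val_inj. Qed.

Section SL2Elements.
Variable F : finFieldType.

Definition SL2_of (M : 'M[F]_2) : GL2 F := insubd (1%g : GL2 F) M.

Lemma SL2_ofK M : \det M = 1 -> GLval (SL2_of M) = M.
Proof. by move=> detM; rewrite insubdK // -topredE /= unitmxE detM unitr1. Qed.

Lemma SL2_of_SL2 M : \det M = 1 -> SL2_of M \in SL2 F.
Proof. by move=> detM; rewrite inE SL2_ofK ?detM. Qed.

Definition upper_unip t := SL2_of (M2 1 t 0 1).
Definition lower_unip t := SL2_of (M2 1 0 t 1).
Definition diag_elt x := SL2_of (M2 x 0 0 x^-1).

Lemma det_upper_unip t : \det (M2 1 t 0 1) = 1 :> F.
Proof. by rewrite M2_det; ring. Qed.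
Lemma det_lower_unip t : \det (M2 1 0 t 1) = 1 :> F.
Proof. by rewrite M2_det; ring. Qed.
Lemma det_diag_elt x : x != 0 -> \det (M2 x 0 0 x^-1) = 1 :> F.
Proof. by move=> x0; rewrite M2_det mulr0 subr0 mulfV. Qed.

Lemma upper_unipE t : GLval (upper_unip t) = M2 1 t 0 1.
Proof. exact/SL2_ofK/det_upper_unip. Qed.
Lemma lower_unipE t : GLval (lower_unip t) = M2 1 0 t 1.
Proof. exact/SL2_ofK/det_lower_unip. Qed.
Lemma diag_eltE x : x != 0 -> GLval (diag_elt x) = M2 x 0 0 x^-1.
Proof. by move=> x0; apply/SL2_ofK/det_diag_elt. Qed.

Lemma upper_unip_SL2 t : upper_unip t \in SL2 F.
Proof. exact/SL2_of_SL2/det_upper_unip. Qed.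
Lemma lower_unip_SL2 t : lower_unip t \in SL2 F.
Proof. exact/SL2_of_SL2/det_lower_unip. Qed.
Lemma diag_elt_SL2 x : x != 0 -> diag_elt x \in SL2 F.
Proof. by move=> x0; apply/SL2_of_SL2/det_diag_elt. Qed.

Lemma upper_unipD : {morph upper_unip : s t / s + t >-> (s * t)%g}.
Proof. by move=> s t; apply: GLval_inj; rewrite GL_MxE !upper_unipE M2_mul; congr M2; ring. Qed.
Lemma lower_unipD : {morph lower_unip : s t / s + t >-> (s * t)%g}.
Proof. by move=> s t; apply: GLval_inj; rewrite GL_MxE !lower_unipE M2_mul; congr M2; ring. Qed.

Lemma diag_eltV x : x != 0 -> diag_elt x^-1 = (diag_elt x)^-1%g.
Proof.
move=> x0; apply: (mulgI (diag_elt x)); rewrite mulgV; apply: GLval_inj.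
rewrite GL_MxE GL_1E !diag_eltE ?invr_eq0 // M2_mul invrK -M2_1.
by congr M2; field.
Qed.

Lemma upper_unipJ x t : x != 0 -> (upper_unip t ^ diag_elt x)%g = upper_unip (t / x ^+ 2).
Proof.
move=> x0; apply: GLval_inj; rewrite conjgE -diag_eltV // !GL_MxE.
rewrite !diag_eltE ?invr_eq0 // !upper_unipE !M2_mul invrK.
by congr M2; field.
Qed.

Lemma lower_unipJ x t : x != 0 -> (lower_unip t ^ diag_elt x)%g = lower_unip (x ^+ 2 * t).
Proof.
move=> x0; apply: GLval_inj; rewrite conjgE -diag_eltV // !GL_MxE.
rewrite !diag_eltE ?invr_eq0 // !lower_unipE !M2_mul invrK.
by congr M2; field.
Qed.
End SL2Elements.

Lemma M2_unip_decomp (F : fieldType) (a b c d : F) :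
  a * d - b * c = 1 -> c != 0 ->
  M2 a b c d = M2 1 ((a - 1) / c) 0 1 *m M2 1 0 c 1 *m M2 1 ((d - 1) / c) 0 1.
Proof.
move=> det1 c0; have -> : b = (a * d - 1) / c by rewrite -det1; field.
by rewrite !M2_mul; congr M2; field.
Qed.

Lemma morph_nat_comb_mem (R : pzSemiRingType) (gT : finGroupType) (H : {group gT})
    (f : R -> gT) (r : R) :
  {morph f : s t / s + t >-> (s * t)%g} -> f 1 \in H -> f r \in H ->
  forall n m : nat, f (n%:R + m%:R * r) \in H.
Proof.
move=> fD f1H frH.
have f0 : f 0 = 1%g by apply: (mulgI (f 0)); rewrite -fD addr0 mulg1.
have fnat k x : f x \in H -> f (k%:R * x) \in H.
  move=> fxH; elim: k => [|k IHk]; first by rewrite mul0r f0 group1.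
  by rewrite mulrS mulrDl mul1r fD groupM.
by move=> n m; rewrite fD -[n%:R]mulr1 groupM ?fnat.
Qed.

Section SL2Generation.
Variable F : finFieldType.

Lemma SL2_sub_unip_gen (H : {group GL2 F}) :
  (forall t, upper_unip t \in H) -> (forall t, lower_unip t \in H) -> SL2 F \subset H.
Proof.
move=> upH loH.
have decomp x : x \in SL2 F -> GLval x 1 0 != 0 -> x \in H.
  rewrite inE [X in \det X]M2E M2_det => /eqP det1 c0.
  pose c := GLval x 1 0.
  suff -> : x = (upper_unip ((GLval x 0 0 - 1) / c)%R * lower_unip c *
                  upper_unip ((GLval x 1 1 - 1) / c)%R)%g by rewrite !groupM ?upH ?loH.
  apply: GLval_inj; rewrite !GL_MxE !upper_unipE lower_unipE.
  by rewrite [LHS]M2E; apply: M2_unip_decomp.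
apply/subsetP => x xSL; have [c0 | /(decomp _ xSL) //] := eqVneq (GLval x 1 0) 0.
rewrite -(mulKg (lower_unip 1) x); apply: groupM; first by rewrite groupV loH.
(* Otherwise the (1,0) entry of [lower_unip 1 * x] is [x 0 0],
   a unit since [det x = x 0 0 * x 1 1]. *)
apply: decomp; first by rewrite groupM ?lower_unip_SL2.
move: xSL; rewrite inE GL_MxE lower_unipE [GLval x]M2E M2_mul M2_det c0 !mxE /=.
rewrite !mul1r !mulr0 !addr0 subr0; apply: contraTneq => ->.
by rewrite mul0r eq_sym oner_eq0.
Qed.

Lemma SL2_gen_unip1_diag (b : F) : b != 0 ->
  (forall x : F, exists n m : nat, x = n%:R + m%:R * b ^+ 2) ->
  <<[set x in [:: lower_unip 1; upper_unip 1; diag_elt b]]>>%g = SL2 F.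
Proof.
move=> b0 span; set H := <<_>>%g.
have [l1H u1H dbH] : [/\ lower_unip 1 \in H, upper_unip 1 \in H & diag_elt b \in H].
  by split; apply: mem_gen; rewrite !inE eqxx ?orbT.
have all_mem (f : F -> GL2 F) : {morph f : s t / s + t >-> (s * t)%g} ->
    f 1 \in H -> f (b ^+ 2) \in H -> forall t, f t \in H.
  by move=> fD f1 fb t; have [n [m ->]] := span t; apply: morph_nat_comb_mem.
apply/eqP; rewrite eqEsubset; apply/andP; split.
  by apply/gen_seq_subG/allP; rewrite /= lower_unip_SL2 upper_unip_SL2 diag_elt_SL2.
apply: (SL2_sub_unip_gen (H := <<_>>%G)); apply: all_mem => //.
- exact: upper_unipD.
- have dbVH : diag_elt b^-1 \in H by rewrite diag_eltV // groupV.
  rewrite -[b ^+ 2]invrK -exprVn -div1r -upper_unipJ ?invr_eq0 //.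
  exact: groupJ u1H dbVH.
- exact: lower_unipD.
- by rewrite -[b ^+ 2]mulr1 -lower_unipJ //; apply: groupJ l1H dbH.
Qed.
End SL2Generation.

Lemma natr_inj_lt_pchar (R : nzRingType) p (n n' : nat) : p \in [pchar R] ->
  (n < p)%N -> (n' < p)%N -> n%:R = n'%:R :> R -> n = n'.
Proof.
move=> chR; wlog le_nn' : n n' / (n <= n')%N.
  by move=> W ltn ltn' eqn; case: (leqP n n') => [|/ltnW] le; [apply: W | apply/esym/W].
move=> _ ltn' eqn; have : (p %| n' - n)%N by rewrite (dvdn_pcharf chR) natrB // eqn subrr.
have [/eqP | pos] := posnP (n' - n); first by rewrite subn_eq0; lia.
by rewrite gtnNdvd //; lia.
Qed.

Lemma finField_prim_root_exists (F : finFieldType) : exists b : F, (#|F|.-1).-primitive_root b.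
Proof.
have n_gt0 : (0 < #|F|.-1)%N by rewrite -subn1 subn_gt0 card_finNzRing_gt1.
pose units := enum [set~ (0 : F)].
have units_root : all (#|F|.-1).-unity_root units.
  apply/allP => x; rewrite mem_enum in_setC1 unity_rootE => x0.
  by apply/eqP/(mulfI x0); rewrite -exprS (ltn_predK (card_finNzRing_gt1 F)) expf_card mulr1.
have card_units : (#|F|.-1 <= size units)%N by rewrite -cardE cardsC1.
by have /hasP[b _ prim_b] := has_prim_root n_gt0 units_root (enum_uniq _) card_units; exists b.
Qed.

Lemma prim_root_neq0 (R : nzRingType) n (z : R) : n.-primitive_root z -> z != 0.
Proof.
move=> prim_z; apply/eqP => z0; have := prim_expr_order prim_z.
by rewrite z0 expr0n gtn_eqF ?(prim_order_gt0 prim_z) //; move/eqP; rewrite eq_sym oner_eq0.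
Qed.

Section FieldOfOrderPrimeSquare.
Variables (F : finFieldType) (p : nat).
Hypotheses (p_pr : prime p) (cardF : #|F| = (p ^ 2)%N).

Let chF : p \in [pchar F] := card_finPcharP cardF p_pr.

Lemma frobenius_nonfixed_span (t : F) : t ^+ p != t ->
  forall x : F, exists n m : nat, x = n%:R + m%:R * t.
Proof.
move=> t_nfix x.
pose f (nm : 'I_p * 'I_p) := nm.1%:R + nm.2%:R * t.
(* A collision would make [t] a quotient of elements of the prime field, fixed by Frobenius. *)
have f_inj : injective f.
  move=> [n m] [n' m']; rewrite /f /= => eq_f.
  have [eq_m | neq_m] := eqVneq (m : nat) (m' : nat).
    move: eq_f; rewrite eq_m => /addIr /(natr_inj_lt_pchar chF (ltn_ord n) (ltn_ord n')) eq_n.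
    by congr (_, _); apply: val_inj.
  have dm0 : m%:R - m'%:R != 0 :> F.
    by rewrite subr_eq0; apply: contra neq_m => /eqP /(natr_inj_lt_pchar chF) ->.
  have def_t : t = (n'%:R - n%:R) / (m%:R - m'%:R).
    apply: (mulIf dm0); rewrite mulfVK //; apply/eqP; rewrite -subr_eq0.
    have -> : t * (m%:R - m'%:R) - (n'%:R - n%:R) = (n%:R + m%:R * t) - (n'%:R + m'%:R * t)
      by ring.
    by rewrite eq_f subrr.
  by case/negP: t_nfix; rewrite def_t -(pFrobenius_autE chF) fmorph_div !rmorphB !rmorph_nat.
have := @inj_card_onto _ _ f f_inj _ x.
rewrite card_prod !card_ord cardF => /(_ (leqnn _)) /codomP[[n m] ->].
by exists n, m.
Qed.

Lemma exists_square_frobenius_nonfixed : exists2 b : F, b != 0 & (b ^+ 2) ^+ p != b ^+ 2.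
Proof.
have [b prim_b] := finField_prim_root_exists F; rewrite cardF in prim_b.
have b0 := prim_root_neq0 prim_b; have p_gt1 := prime_gt1 p_pr.
exists b => //; rewrite -!exprM.
have b_ne1 : b ^+ (2 * p - 2) != 1 by rewrite -(prim_order_dvd prim_b) gtnNdvd //; nia.
apply: contra b_ne1 => /eqP eq_b; apply/eqP/(mulIf (expf_neq0 2 b0)).
by rewrite mul1r -exprD subnK ?eq_b //; lia.
Qed.

Lemma exists_frobenius_antifixed : odd p ->
  exists a : F, [/\ a != 0, a ^+ p = - a & a ^+ 2 != 1].
Proof.
move=> p_odd; have [k def_p] : exists k, p = k.*2.+1.
  by exists p./2; rewrite -[LHS]odd_double_half p_odd add1n.
have k_gt0 : (0 < k)%N by have := prime_gt1 p_pr; lia.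
(* With [b] of order p^2 - 1 = 4k(k+1), [a := b^(k+1)] has a^(p-1) = b^((p^2-1)/2) = -1. *)
have [b prim_b] := finField_prim_root_exists F.
have card_units : (#|F|.-1 = 4 * k * k.+1)%N by rewrite cardF def_p; nia.
rewrite card_units in prim_b; have b0 := prim_root_neq0 prim_b.
have b_ne1 i : (0 < i < 4 * k * k.+1)%N -> b ^+ i != 1.
  by case/andP => i_gt0 i_lt; rewrite -(prim_order_dvd prim_b) gtnNdvd.
have half_eq : b ^+ (k.*2 * k.+1) = -1.
  have half_ne1 : b ^+ (k.*2 * k.+1) != 1 by apply: b_ne1; nia.
  have : (b ^+ (k.*2 * k.+1)) ^+ 2 == 1.
    by rewrite -exprM -(prim_expr_order prim_b); apply/eqP; congr (_ ^+ _); nia.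
  by rewrite sqrf_eq1 (negbTE half_ne1) => /eqP.
exists (b ^+ k.+1); split.
- exact: expf_neq0.
- rewrite def_p -exprM (_ : (k.+1 * k.*2.+1 = k.+1 + k.*2 * k.+1)%N); last by nia.
  by rewrite exprD half_eq mulrN1.
- by rewrite -exprM b_ne1 //; nia.
Qed.
End FieldOfOrderPrimeSquare.

Section SL2Subgroups.
Variables (F : finFieldType) (p : nat) (chF : p \in [pchar F]).
Local Notation frob := (pFrobenius_aut chF).

Definition upper_tri := [set x in SL2 F | GLval x 1 0 == 0].
Definition lower_tri := [set x in SL2 F | GLval x 0 1 == 0].
(* The image of [frob_pm] in PSL(2,p^2) is PGL(2,p). *)
Definition frob_pm :=
  [set x in SL2 F | (map_mx frob (GLval x) == GLval x) || (map_mx frob (GLval x) == - GLval x)].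

Lemma upper_tri_group_set : group_set upper_tri.
Proof.
apply/group_setP; split => [|x y]; first by rewrite inE group1 GL_1E mxE /=.
move=> /setIdP[xSL /eqP x10] /setIdP[ySL /eqP y10]; apply/setIdP; split; first exact: groupM.
by rewrite GL_MxE mulmx2E mxE /= x10 y10 mul0r mulr0 addr0.
Qed.

Lemma lower_tri_group_set : group_set lower_tri.
Proof.
apply/group_setP; split => [|x y]; first by rewrite inE group1 GL_1E mxE /=.
move=> /setIdP[xSL /eqP x01] /setIdP[ySL /eqP y01]; apply/setIdP; split; first exact: groupM.
by rewrite GL_MxE mulmx2E mxE /= x01 y01 mul0r mulr0 addr0.
Qed.

Lemma frob_pm_group_set : group_set frob_pm.
Proof.
apply/group_setP; split => [|x y]; first by rewrite inE group1 GL_1E map_mx1 eqxx.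
move=> /setIdP[xSL fx] /setIdP[ySL fy]; apply/setIdP; split; first exact: groupM.
rewrite GL_MxE map_mxM.
by case/orP: fx => /eqP->; case/orP: fy => /eqP->; rewrite ?mulNmx ?mulmxN ?opprK eqxx ?orbT.
Qed.

Canonical upper_tri_group := Group upper_tri_group_set.
Canonical lower_tri_group := Group lower_tri_group_set.
Canonical frob_pm_group := Group frob_pm_group_set.

Lemma center_SL2_scalar z : z \in 'Z(SL2 F)%g -> exists2 c : F, GLval z = c%:M & c ^+ 2 = 1.
Proof.
case/centerP => zSL cz.
have /(congr1 GLval) zu := cz _ (upper_unip_SL2 1).
have /(congr1 GLval) zl := cz _ (lower_unip_SL2 1).
move: zSL zu zl; rewrite inE !GL_MxE upper_unipE lower_unipE [GLval z]M2E !M2_mul M2_det.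
set a := GLval z 0 0; set b := GLval z 0 1; set c := GLval z 1 0; set d := GLval z 1 1.
rewrite !mulr1 !mul1r !mulr0 !mul0r !addr0 !add0r.
move=> /eqP det1 /M2_inj[ua ub _ _] /M2_inj[la _ _ _].
have c0 : c = 0 by apply: (addrI a); rewrite -ua addr0.
have b0 : b = 0 by apply: (addrI a); rewrite la addr0.
have da : d = a by apply: (addrI b); rewrite -ub addrC.
exists a; first by rewrite b0 c0 da M2_scalar.
by move: det1; rewrite b0 c0 da mulr0 subr0 expr2.
Qed.

Lemma diag_elt_notin_center x : x != 0 -> x ^+ 2 != 1 -> diag_elt x \notin 'Z(SL2 F)%g.
Proof.
move=> x0 x2; apply/negP => /center_SL2_scalar[c]; rewrite diag_eltE // -M2_scalar.
case/M2_inj => xc _ _ xVc _; case/negP: x2.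
by rewrite expr2 {2}xc -xVc mulfV.
Qed.

Lemma center_sub_upper_tri : 'Z(SL2 F)%g \subset upper_tri.
Proof.
apply/subsetP => z zZ; have [c zc _] := center_SL2_scalar zZ.
by apply/setIdP; rewrite (subsetP (center_sub _)) // zc mxE.
Qed.

Lemma center_sub_lower_tri : 'Z(SL2 F)%g \subset lower_tri.
Proof.
apply/subsetP => z zZ; have [c zc _] := center_SL2_scalar zZ.
by apply/setIdP; rewrite (subsetP (center_sub _)) // zc mxE.
Qed.

Lemma center_sub_frob_pm : 'Z(SL2 F)%g \subset frob_pm.
Proof.
apply/subsetP => z zZ; have [c zc c2] := center_SL2_scalar zZ.
apply/setIdP; split; first exact: (subsetP (center_sub _)).
have frob_c : c ^+ p = c.
  by move/eqP: c2; rewrite sqrf_eq1 -(pFrobenius_autE chF) => /orP[] /eqP->;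
    rewrite ?rmorph1 ?rmorphN1.
by rewrite zc map_scalar_mx /= pFrobenius_autE frob_c eqxx.
Qed.

Lemma upper_unip_upper_tri t : upper_unip t \in upper_tri.
Proof. by apply/setIdP; rewrite upper_unip_SL2 upper_unipE mxE. Qed.

Lemma lower_unip_lower_tri t : lower_unip t \in lower_tri.
Proof. by apply/setIdP; rewrite lower_unip_SL2 lower_unipE mxE. Qed.

Lemma diag_elt_upper_tri x : x != 0 -> diag_elt x \in upper_tri.
Proof. by move=> x0; apply/setIdP; rewrite diag_elt_SL2 // diag_eltE // mxE. Qed.

Lemma diag_elt_lower_tri x : x != 0 -> diag_elt x \in lower_tri.
Proof. by move=> x0; apply/setIdP; rewrite diag_elt_SL2 // diag_eltE // mxE. Qed.

Lemma lower_unip_notin_upper_tri t : t != 0 -> lower_unip t \notin upper_tri.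
Proof. by move=> t0; apply/negP => /setIdP[_]; rewrite lower_unipE mxE /= (negbTE t0). Qed.

Lemma upper_unip_notin_lower_tri t : t != 0 -> upper_unip t \notin lower_tri.
Proof. by move=> t0; apply/negP => /setIdP[_]; rewrite upper_unipE mxE /= (negbTE t0). Qed.

Lemma upper_unip_frob_pm t : t ^+ p = t -> upper_unip t \in frob_pm.
Proof.
move=> tp; apply/setIdP; split; first exact: upper_unip_SL2.
by rewrite upper_unipE M2_map rmorph0 rmorph1 pFrobenius_autE tp eqxx.
Qed.

Lemma lower_unip_frob_pm t : t ^+ p = t -> lower_unip t \in frob_pm.
Proof.
move=> tp; apply/setIdP; split; first exact: lower_unip_SL2.
by rewrite lower_unipE M2_map rmorph0 rmorph1 pFrobenius_autE tp eqxx.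
Qed.

Lemma diag_elt_frob_pm x : x != 0 -> x ^+ p = - x -> diag_elt x \in frob_pm.
Proof.
move=> x0 xp; apply/setIdP; split; first exact: diag_elt_SL2.
by rewrite diag_eltE // M2_map rmorph0 fmorphV /= !pFrobenius_autE xp invrN M2_opp oppr0 eqxx orbT.
Qed.

Lemma diag_elt_notin_frob_pm x : x != 0 -> (x ^+ 2) ^+ p != x ^+ 2 -> diag_elt x \notin frob_pm.
Proof.
move=> x0 x2p; apply/negP => /setIdP[_]; rewrite diag_eltE // M2_map M2_opp.
case/orP => /eqP /M2_inj[fx _ _ _]; case/negP: x2p;
  by rewrite -exprM mulnC exprM -(pFrobenius_autE chF) fx ?sqrrN.
Qed.

Definition SL2_cover (i : nat) : {group GL2 F} :=
  nth frob_pm_group [:: upper_tri_group; lower_tri_group; frob_pm_group] i.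

Lemma center_sub_SL2_cover i : 'Z(SL2 F)%g \subset SL2_cover i.
Proof.
case: i => [|[|[|i]]]; rewrite /SL2_cover /= ?nth_nil.
- exact: center_sub_upper_tri.
- exact: center_sub_lower_tri.
- exact: center_sub_frob_pm.
- exact: center_sub_frob_pm.
Qed.

Lemma SL2_notsub_cover (b : F) : b != 0 -> (b ^+ 2) ^+ p != b ^+ 2 ->
  forall i, (i < 3)%N -> ~~ (SL2 F \subset SL2_cover i).
Proof.
move=> b0 b2p [|[|[|//]]] _; apply/subsetPn.
- by exists (lower_unip 1); [exact: lower_unip_SL2 | exact/lower_unip_notin_upper_tri/oner_neq0].
- by exists (upper_unip 1); [exact: upper_unip_SL2 | exact/upper_unip_notin_lower_tri/oner_neq0].
- by exists (diag_elt b); [exact: diag_elt_SL2 | exact: diag_elt_notin_frob_pm].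
Qed.

Lemma SL2_gens_mem_cover (b : F) : b != 0 ->
  forall i j, (i < 3)%N -> (j < 3)%N -> j != i ->
  nth 1%g [:: lower_unip 1; upper_unip 1; diag_elt b] j \in SL2_cover i.
Proof.
move=> b0 [|[|[|//]]] [|[|[|//]]] //= _ _ _;
  rewrite ?upper_unip_upper_tri ?lower_unip_lower_tri ?diag_elt_upper_tri ?diag_elt_lower_tri //.
- by apply: lower_unip_frob_pm; rewrite expr1n.
- by apply: upper_unip_frob_pm; rewrite expr1n.
Qed.

Lemma diag_antifixed_mem_cover (a : F) : a != 0 -> a ^+ p = - a ->
  forall i, diag_elt a \in SL2_cover i.
Proof.
move=> a0 ap [|[|[|i]]]; rewrite /SL2_cover /= ?nth_nil.
- exact: diag_elt_upper_tri.
- exact: diag_elt_lower_tri.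
- exact: diag_elt_frob_pm.
- exact: diag_elt_frob_pm.
Qed.
End SL2Subgroups.

Theorem theorem2p6 (p : nat) (F : finFieldType) :
  prime p -> (p %% 10 = 3 \/ p %% 10 = 7)%N -> #|F| = (p ^ 2)%N ->
  m_equals (PSL2 F) 3 -> ~ group_replacement (PSL2 F).
Proof.
move=> p_pr p_mod cardF mG.
have p_odd : odd p by move: (modn2 p); case: (odd p) => //= p_even; lia.
have chF := card_finPcharP cardF p_pr.
have [b b0 b2p] := exists_square_frobenius_nonfixed p_pr cardF.
have [a [a0 ap a2]] := exists_frobenius_antifixed p_pr cardF p_odd.
apply: (quotient_covers_not_group_replacement (G := SL2 F) (N := 'Z(SL2 F)%G)
  (s := [:: lower_unip 1; upper_unip 1; diag_elt b]) (K := SL2_cover chF)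
  (g := diag_elt a) _ _ _ _ _ mG).
- exact: SL2_gen_unip1_diag b0 (frobenius_nonfixed_span p_pr cardF b2p).
- exact: normal_norm (center_normal _).
- by move=> i _; apply: center_sub_SL2_cover.
- exact: SL2_notsub_cover b0 b2p.
- exact: SL2_gens_mem_cover b0.
- exact: diag_elt_SL2.
- exact: diag_elt_notin_center.
- by move=> i _; apply: diag_antifixed_mem_cover.
Qed.
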